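(* For every integer $j\ge0$ and every $t\ge0$, $$e^{-t}\frac{t^j}{j!}=\sum_{k=j}^\infty \sigma_2(k,j)\,j!\,(-1)^{k-j}\,p_k(t),$$ the series being convergent.
   Context: $\sigma_2(k,j)$ are the Stirling numbers of the second kind; $\sigma_1(k,j)$ are the unsigned Stirling numbers of the first kind ($\sigma_1(k,j)=0$ for $k<j$, $\sigma_1(0,0)=1$); $p_k(t)=e^{-t}\sum_{m=k}^\infty \frac{t^m}{m!}\frac{\sigma_1(m,k)}{m!}$. *)

From Stdlib Require Import Reals Arith.
From Coquelicot Require Import Coquelicot.
Open Scope R_scope.

Fixpoint stirling2 (n k : nat) : nat :=
  match n, k with
  | O, O => 1%nat
  | O, S _ => 0%nat
  | S _, O => 0%nat
  | S n', S k' => (S k' * stirling2 n' (S k') + stirling2 n' k')%nat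
  end.

Fixpoint stirling1 (n k : nat) : nat :=
  match n, k with
  | O, O => 1%nat
  | O, S _ => 0%nat
  | S _, O => 0%nat
  | S n', S k' => (n' * stirling1 n' (S k') + stirling1 n' k')%nat
  end.

(* p_k(t) = e^{-t} sum_{m>=k} t^m/m! * sigma1(m,k)/m!  (index shifted: m = i + k) *)
Definition p (k : nat) (t : R) : R :=
  exp (- t) * Series (fun i : nat =>
    t ^ (i + k) / INR (fact (i + k)) * INR (stirling1 (i + k) k) / INR (fact (i + k))).

From Stdlib Require Import Reals Arith Lia Lra.
From Coquelicot Require Import Coquelicot.
Open Scope R_scope.

(* Writing p_k(t) = e^{-t} sum_m t^m sigma1(m,k) / m!^2 and exchanging the finite
   partial sum over k = n + j, n <= N, with the series over m, the N-th partial sum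
   becomes e^{-t} j! sum_m t^m / m!^2 B_N(m), where
   B_N(m) = sum_{n<=N} (-1)^n sigma2(n+j,j) sigma1(m,n+j).
   By the orthogonality of the Stirling numbers of the two kinds, B_N(m) is the
   Kronecker delta of m and j as long as m <= N + j, while |B_N(m)| <= (j+1)^m m!
   always.  So the error is at most the tail sum_{m > N+j} (t(j+1))^m / m! of an
   exponential series. *)

Lemma sum_f_R0_single (f : nat -> R) j K : (j <= K)%nat ->
  (forall i, (i <= K)%nat -> i <> j -> f i = 0) -> sum_f_R0 f K = f j.
Proof.
  intros HjK Hf; induction K as [|K IHK]; cbn.
  - now replace j with 0%nat by lia.
  - destruct (Nat.eq_dec j (S K)) as [->|Hj].
    + rewrite sum_eq_R0; [ring|]; intros i Hi; apply Hf; lia.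
    + assert (HK : sum_f_R0 f K = f j) by (apply IHK; [lia | intros i Hi; apply Hf; lia]).
      rewrite HK, (Hf (S K)) by lia; ring.
Qed.

Lemma sum_f_R0_shift (f : nat -> R) N j : (forall i, (i < j)%nat -> f i = 0) ->
  sum_f_R0 f (N + j) = sum_f_R0 (fun n => f (n + j)%nat) N.
Proof.
  revert f; induction j as [|j IHj]; intros f Hf.
  - rewrite Nat.add_0_r; apply sum_eq; intros; now rewrite Nat.add_0_r.
  - rewrite Nat.add_succ_r, (decomp_sum f (S (N + j))), Hf by lia; cbn [pred].
    rewrite (IHj (fun i => f (S i))) by (intros; apply Hf; lia).
    rewrite Rplus_0_l; apply sum_eq; intros; f_equal; lia.
Qed.

Lemma sum_f_R0_shift_le (f : nat -> R) N j : (forall i, 0 <= f i) ->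
  sum_f_R0 (fun n => f (n + j)%nat) N <= sum_f_R0 f (N + j).
Proof.
  revert f; induction j as [|j IHj]; intros f Hf.
  - rewrite Nat.add_0_r; right; apply sum_eq; intros; now rewrite Nat.add_0_r.
  - rewrite Nat.add_succ_r, (decomp_sum f (S (N + j))) by lia; cbn [pred].
    rewrite (sum_eq _ (fun n => f (S (n + j)))) by (intros; f_equal; lia).
    specialize (IHj (fun i => f (S i)) (fun i => Hf (S i))); cbn in IHj.
    pose proof (Hf 0%nat); lra.
Qed.

Lemma is_series_exp x : is_series (fun m => x ^ m / INR (fact m)) (exp x).
Proof.
  apply (is_series_ext (fun m => / INR (fact m) * x ^ m)); [intros; apply Rmult_comm|].
  apply is_series_Reals, (proj2_sig (exist_exp x)).
Qed.

Lemma Series_sub_sum_abs_le (a g : nat -> R) n :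
  (forall m, Rabs (a m) <= g m) -> ex_series g ->
  Rabs (Series a - sum_f_R0 a n) <= Series g - sum_f_R0 g n.
Proof.
  intros Hag Hg.
  assert (Ha : ex_series a) by exact (ex_series_le a g Hag Hg).
  rewrite (Series_incr_n a (S n)), (Series_incr_n g (S n)) by (lia || assumption); cbn [pred].
  replace (_ + _ - _) with (Series (fun k => a (S n + k)%nat)) by ring.
  replace (_ + _ - _) with (Series (fun k => g (S n + k)%nat)) by ring.
  assert (Hg' : ex_series (fun k => g (S n + k)%nat)) by now apply ex_series_incr_n.
  eapply Rle_trans; [apply Series_Rabs|apply Series_le]; try assumption.
  - apply (@ex_series_le R_AbsRing R_CompleteNormedModule _ _) with (2 := Hg'); intros k.
    change (Rabs (Rabs (a (S n + k)%nat)) <= g (S n + k)%nat).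
    rewrite Rabs_Rabsolu; apply Hag.
  - intros k; split; [apply Rabs_pos | apply Hag].
Qed.

Lemma is_series_of_tail_bound (a g : nat -> R) (l c : R) k : ex_series g ->
  (forall N, Rabs (sum_f_R0 a N - l) <= c * (Series g - sum_f_R0 g (N + k))) ->
  is_series a l.
Proof.
  intros [G HG] Hbound; rewrite (is_series_unique g G HG) in Hbound.
  apply is_series_Reals in HG; apply is_series_Reals.
  intros eps Heps.
  destruct (HG (eps / (Rabs c + 1))) as [N0 HN0].
  { apply Rdiv_lt_0_compat; [assumption|pose proof (Rabs_pos c); lra]. }
  exists N0; intros N HN; unfold R_dist.
  specialize (HN0 (N + k)%nat ltac:(lia)); unfold R_dist in HN0.
  eapply Rle_lt_trans; [apply Hbound|].
  eapply Rle_lt_trans; [apply Rle_abs|].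
  rewrite Rabs_mult, Rabs_minus_sym.
  apply (Rle_lt_trans _ ((Rabs c + 1) * Rabs (sum_f_R0 g (N + k) - G))).
  - apply Rmult_le_compat_r; [apply Rabs_pos|lra].
  - apply (Rmult_lt_compat_l (Rabs c + 1)) in HN0; [|pose proof (Rabs_pos c); lra].
    replace ((Rabs c + 1) * (eps / (Rabs c + 1))) with eps in HN0
      by (field; pose proof (Rabs_pos c); lra).
    exact HN0.
Qed.

Lemma is_series_sum_f_R0 (a : nat -> nat -> R) N : (forall n, ex_series (a n)) ->
  is_series (fun m => sum_f_R0 (fun n => a n m) N) (sum_f_R0 (fun n => Series (a n)) N).
Proof.
  intros Ha; induction N as [|N IHN]; cbn [sum_f_R0].
  - apply Series_correct, Ha.
  - apply (is_series_plus (V := R_NormedModule)); [exact IHN | apply Series_correct, Ha].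
Qed.

Lemma stirling1_eq0 m k : (m < k)%nat -> stirling1 m k = 0%nat.
Proof.
  revert k; induction m as [|m IHm]; intros [|k] Hmk; cbn; try lia.
  rewrite !IHm by lia; lia.
Qed.

Lemma stirling2_eq0 k j : (k < j)%nat -> stirling2 k j = 0%nat.
Proof.
  revert j; induction k as [|k IHk]; intros [|j] Hkj; cbn; try lia.
  rewrite !IHk by lia; lia.
Qed.

Lemma stirling2_le_pow k j : (stirling2 k j <= (j + 1) ^ k)%nat.
Proof.
  revert j; induction k as [|k IHk]; intros [|j]; cbn [stirling2]; try (cbn; lia).
  pose proof (IHk (S j)); pose proof (IHk j).
  assert ((j + 1) ^ k <= (S j + 1) ^ k)%nat by (apply Nat.pow_le_mono_l; lia).
  rewrite Nat.pow_succ_r'. nia.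
Qed.

Lemma INR_stirling1_SS m k :
  INR (stirling1 (S m) (S k)) = INR m * INR (stirling1 m (S k)) + INR (stirling1 m k).
Proof. cbn [stirling1]. rewrite plus_INR, mult_INR; reflexivity. Qed.

Lemma INR_stirling2_SS k j :
  INR (stirling2 (S k) (S j)) = INR (S j) * INR (stirling2 k (S j)) + INR (stirling2 k j).
Proof. cbn [stirling2]. rewrite plus_INR, mult_INR; reflexivity. Qed.

Lemma stirling_orthogonality m j K : (m <= K)%nat ->
  sum_f_R0 (fun k => (-1) ^ k * INR (stirling1 m k) * INR (stirling2 k j)) K
  = if Nat.eqb m j then (-1) ^ j else 0.
Proof.
  revert j K; induction m as [|m IHm]; intros j K HmK.
  - rewrite (sum_f_R0_single _ 0) by
      (lia || (intros [|i] _ Hi; [lia | cbn [stirling1]; rewrite INR_0; ring])).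
    destruct j; cbn; ring.
  - rewrite (decomp_sum _ K) by lia; change (stirling1 (S m) 0) with 0%nat.
    rewrite INR_0, Rmult_0_r, Rmult_0_l, Rplus_0_l.
    destruct j as [|j].
    + apply sum_eq_R0; intros; cbn [stirling2]; rewrite INR_0; ring.
    + rewrite (sum_eq _ (fun i =>
          (-1) ^ S i * INR (stirling1 m (S i)) * INR (stirling2 (S i) (S j)) * INR m
          - (-1) ^ i * INR (stirling1 m i) * INR (stirling2 i (S j)) * INR (S j)
          - (-1) ^ i * INR (stirling1 m i) * INR (stirling2 i j)))
        by (intros; rewrite INR_stirling1_SS, INR_stirling2_SS; cbn [pow]; ring).
      rewrite !minus_sum, <- !scal_sum.
      assert (Hshift : sum_f_R0 (fun i =>
          (-1) ^ S i * INR (stirling1 m (S i)) * INR (stirling2 (S i) (S j))) (pred K)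
        = sum_f_R0 (fun k => (-1) ^ k * INR (stirling1 m k) * INR (stirling2 k (S j))) K).
      { rewrite (decomp_sum _ K) by lia; change (stirling2 0 (S j)) with 0%nat.
        rewrite INR_0; ring. }
      rewrite Hshift, !IHm by lia.
      destruct (Nat.eqb_spec m (S j)), (Nat.eqb_spec m j), (Nat.eqb_spec (S m) (S j));
        try lia; subst; rewrite ?S_INR; cbn [pow]; ring.
Qed.

Lemma sum_stirling1_le_fact m K : sum_f_R0 (fun k => INR (stirling1 m k)) K <= INR (fact m).
Proof.
  revert K; induction m as [|m IHm]; intros K.
  - rewrite (sum_f_R0_single _ 0) by (lia || (intros [|i] _ Hi; [lia | reflexivity])).
    cbn; lra.
  - destruct K as [|K].
    { cbn [sum_f_R0]; change (stirling1 (S m) 0) with 0%nat.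
      rewrite INR_0; left; apply INR_fact_lt_0. }
    rewrite (decomp_sum _ (S K)) by lia; cbn [pred]; change (stirling1 (S m) 0) with 0%nat.
    rewrite (sum_eq _ (fun i => INR (stirling1 m (S i)) * INR m + INR (stirling1 m i)))
      by (intros; rewrite INR_stirling1_SS; ring).
    rewrite plus_sum, <- scal_sum, fact_simpl, mult_INR, S_INR.
    assert (Hshift : sum_f_R0 (fun i => INR (stirling1 m (S i))) K
                     <= sum_f_R0 (fun k => INR (stirling1 m k)) (S K)).
    { rewrite (decomp_sum _ (S K)) by lia; pose proof (pos_INR (stirling1 m 0)); cbn [pred]; lra. }
    pose proof (IHm (S K)); pose proof (IHm K); pose proof (pos_INR m).
    assert (INR m * sum_f_R0 (fun i => INR (stirling1 m (S i))) K <= INR m * INR (fact m))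
      by (apply Rmult_le_compat_l; lra).
    cbn; lra.
Qed.

Lemma stirling1_le_fact m k : INR (stirling1 m k) <= INR (fact m).
Proof.
  eapply Rle_trans; [|apply (sum_stirling1_le_fact m k)].
  destruct k as [|k]; cbn; [lra|].
  pose proof (cond_pos_sum (fun i => INR (stirling1 m i)) k (fun i => pos_INR _)); lra.
Qed.

Definition stirling_inversion_sum (j N m : nat) : R :=
  sum_f_R0 (fun n => (-1) ^ n * INR (stirling2 (n + j) j) * INR (stirling1 m (n + j))) N.

Lemma stirling_inversion_sum_eq j N m : (m <= N + j)%nat ->
  stirling_inversion_sum j N m = if Nat.eqb m j then 1 else 0.
Proof.
  intros HmNj.
  assert (Hsign : (-1) ^ j * (-1) ^ j = 1)
    by (rewrite <- Rpow_mult_distr; replace (-1 * -1) with 1 by ring; apply pow1).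
  assert (Hortho := stirling_orthogonality m j (N + j) HmNj).
  rewrite sum_f_R0_shift in Hortho
    by (intros i Hi; rewrite stirling2_eq0, INR_0 by lia; ring).
  assert (Hscale : sum_f_R0 (fun n => (-1) ^ (n + j) * INR (stirling1 m (n + j))
                                        * INR (stirling2 (n + j) j)) N
                   = stirling_inversion_sum j N m * (-1) ^ j).
  { unfold stirling_inversion_sum; rewrite Rmult_comm, scal_sum.
    apply sum_eq; intros; rewrite pow_add; ring. }
  rewrite Hscale in Hortho.
  apply (f_equal (Rmult ((-1) ^ j))) in Hortho.
  destruct (Nat.eqb m j); rewrite Rmult_comm, Rmult_assoc, Hsign in Hortho; lra.
Qed.

Lemma stirling_inversion_sum_bound j N m :
  Rabs (stirling_inversion_sum j N m) <= INR (j + 1) ^ m * INR (fact m).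
Proof.
  unfold stirling_inversion_sum; eapply Rle_trans; [apply Rsum_abs|].
  eapply Rle_trans; [apply (sum_Rle _ (fun n => INR (stirling1 m (n + j)) * INR (j + 1) ^ m))|].
  - intros n _.
    rewrite !Rabs_mult, pow_1_abs, !Rabs_pos_eq, Rmult_1_l by apply pos_INR.
    destruct (le_lt_dec (n + j) m).
    + rewrite (Rmult_comm (INR (stirling1 _ _))); apply Rmult_le_compat_r; [apply pos_INR|].
      rewrite <- pow_INR; apply le_INR.
      eapply Nat.le_trans; [apply stirling2_le_pow | apply Nat.pow_le_mono_r; lia].
    + rewrite stirling1_eq0, INR_0 by lia; lra.
  - rewrite <- scal_sum; apply Rmult_le_compat_l; [apply pow_le, pos_INR|].
    eapply Rle_trans; [apply (sum_f_R0_shift_le (fun k => INR (stirling1 m k)))|];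
      [intros; apply pos_INR | apply sum_stirling1_le_fact].
Qed.

Section Expansion.

Variable t : R.
Hypothesis t_ge0 : 0 <= t.

Definition p_coef (m k : nat) : R :=
  t ^ m / INR (fact m) * INR (stirling1 m k) / INR (fact m).

Lemma p_coef_bound m k : Rabs (p_coef m k) <= t ^ m / INR (fact m).
Proof.
  pose proof (INR_fact_lt_0 m).
  assert (Hw : 0 <= t ^ m / INR (fact m)) by (apply Rdiv_le_0_compat; [apply pow_le|]; assumption).
  unfold p_coef.
  rewrite Rabs_pos_eq by (apply Rdiv_le_0_compat; [apply Rmult_le_pos, pos_INR|]; assumption).
  apply (Rmult_le_reg_r (INR (fact m))); [assumption|].
  unfold Rdiv; rewrite Rmult_assoc, Rinv_l, Rmult_1_r by lra.
  apply Rmult_le_compat_l; [assumption | apply stirling1_le_fact].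
Qed.

Lemma ex_series_p_coef k : ex_series (fun m => p_coef m k).
Proof.
  apply (@ex_series_le R_AbsRing R_CompleteNormedModule _ (fun m => t ^ m / INR (fact m))).
  { intros m; apply p_coef_bound. }
  eexists; apply is_series_exp.
Qed.

Lemma p_eq_Series k : p k t = exp (- t) * Series (fun m => p_coef m k).
Proof.
  unfold p; f_equal.
  rewrite (Series_incr_n_aux (fun m => p_coef m k) k).
  - apply Series_ext; intros i; now rewrite Nat.add_comm.
  - intros m Hm; unfold p_coef; rewrite stirling1_eq0, INR_0 by lia; unfold Rdiv; ring.
Qed.

Variable j : nat.

Definition expansion_term (N m : nat) : R :=
  t ^ m / INR (fact m) / INR (fact m) * stirling_inversion_sum j N m.

Lemma Series_expansion_term N :
  Series (expansion_term N)
  = sum_f_R0 (fun n => (-1) ^ n * INR (stirling2 (n + j) j)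
                       * Series (fun m => p_coef m (n + j))) N.
Proof.
  rewrite (Series_ext _ (fun m => sum_f_R0 (fun n =>
             (-1) ^ n * INR (stirling2 (n + j) j) * p_coef m (n + j)) N)).
  - rewrite (is_series_unique _ _ (is_series_sum_f_R0 _ N (fun n =>
      ex_series_scal_l (V := R_NormedModule) _ _ (ex_series_p_coef (n + j))))).
    apply sum_eq; intros n _; apply Series_scal_l.
  - intros m; unfold expansion_term, stirling_inversion_sum, p_coef; rewrite scal_sum.
    apply sum_eq; intros; unfold Rdiv; ring.
Qed.

Lemma expansion_term_bound N m :
  Rabs (expansion_term N m) <= (t * INR (j + 1)) ^ m / INR (fact m).
Proof.
  pose proof (INR_fact_lt_0 m).
  assert (Hw : 0 <= t ^ m / INR (fact m) / INR (fact m))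
    by (repeat apply Rdiv_le_0_compat; try apply pow_le; assumption).
  unfold expansion_term; rewrite Rabs_mult, (Rabs_pos_eq _ Hw).
  eapply Rle_trans; [apply Rmult_le_compat_l, stirling_inversion_sum_bound; assumption|].
  right; rewrite Rpow_mult_distr; field; lra.
Qed.

Lemma Series_expansion_term_near N :
  Rabs (Series (expansion_term N) - t ^ j / INR (fact j) / INR (fact j))
  <= Series (fun m => (t * INR (j + 1)) ^ m / INR (fact m))
     - sum_f_R0 (fun m => (t * INR (j + 1)) ^ m / INR (fact m)) (N + j).
Proof.
  assert (Hhead : sum_f_R0 (expansion_term N) (N + j) = t ^ j / INR (fact j) / INR (fact j)).
  { unfold expansion_term; rewrite (sum_f_R0_single _ j) by (lia || (intros m Hm Hmj;
      rewrite stirling_inversion_sum_eq by lia; apply Nat.eqb_neq in Hmj; rewrite Hmj; ring)).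
    rewrite stirling_inversion_sum_eq, Nat.eqb_refl by lia; ring. }
  rewrite <- Hhead; apply Series_sub_sum_abs_le; [apply expansion_term_bound|].
  eexists; apply is_series_exp.
Qed.

Lemma partial_sum_eq_Series N :
  sum_f_R0 (fun n => INR (stirling2 (n + j) j) * INR (fact j) * (-1) ^ n * p (n + j) t) N
  = exp (- t) * INR (fact j) * Series (expansion_term N).
Proof.
  rewrite Series_expansion_term, scal_sum.
  apply sum_eq; intros n _; rewrite p_eq_Series; ring.
Qed.

End Expansion.

Theorem lemma2 (j : nat) (t : R) (ht : 0 <= t) :
  is_series (fun n : nat =>
      INR (stirling2 (n + j) j) * INR (fact j) * (-1) ^ n * p (n + j) t)
    (exp (- t) * t ^ j / INR (fact j)).
Proof.
  pose proof (INR_fact_lt_0 j).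
  apply (is_series_of_tail_bound _ (fun m => (t * INR (j + 1)) ^ m / INR (fact m)) _
           (exp (- t) * INR (fact j)) j); [eexists; apply is_series_exp|].
  intros N; rewrite partial_sum_eq_Series by exact ht.
  replace (exp (- t) * t ^ j / INR (fact j))
    with (exp (- t) * INR (fact j) * (t ^ j / INR (fact j) / INR (fact j))) by (field; lra).
  rewrite <- Rmult_minus_distr_l, Rabs_mult, Rabs_pos_eq
    by (apply Rmult_le_pos; [apply Rlt_le, exp_pos | lra]).
  apply Rmult_le_compat_l; [apply Rmult_le_pos; [apply Rlt_le, exp_pos | lra]|].
  apply Series_expansion_term_near, ht.
Qed.
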